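(* In the setting below, if the minimal semigroup $\{P(t)\}_{t\ge0}$ has an invariant density $\tilde f$ with $\tilde f>0$ $m$-a.e., then $\{P(t)\}_{t\ge0}$ is stochastic.
   Context: Setting: $(E,\mathcal{E},m)$ is a $\sigma$-finite measure space, $L^1=L^1(E,\mathcal{E},m)$, $L^1_+$ its nonnegative elements, $D(m)=\{f\in L^1_+:\|f\|=1\}$ the densities. A linear operator on $L^1$ is stochastic if it maps $D(m)$ into $D(m)$, substochastic if it is a positive contraction; a (sub)stochastic semigroup is a $C_0$-semigroup of (sub)stochastic operators. A substochastic operator $Q$ is extended to nonnegative measurable $f=\sup_n f_n$ ($0\le f_n\uparrow$, $f_n\in L^1_+$) by $Qf=\sup_nQf_n$ (possibly $+\infty$); $f\ge0$ measurable is subinvariant (invariant) for $Q$ if $Qf\le f$ ($Qf=f$), and for a semigroup if this holds for each $P(t)$. Let $P$ be a stochastic operator on $L^1$, $\varphi\colon E\to[0,\infty)$ measurable, and $\{S(t)\}_{t\ge0}$ a substochastic semigroup with generator $(A,\mathcal{D}(A))$ such that $\mathcal{D}(A)\subseteq L^1_\varphi=\{f\in L^1:\int\varphi|f|\,dm<\infty\}$ and $\int_E Af\,dm=-\int_E\varphi f\,dm$ for all $f\in\mathcal{D}(A)\cap L^1_+$. $R(\lambda,A)=(\lambda-A)^{-1}=\int_0^\infty e^{-\lambda s}S(s)\,ds$ for $\lambda>0$. The minimal semigroup $\{P(t)\}_{t\ge0}$ is the substochastic semigroup whose generator $(\mathcal{C},\mathcal{D}(\mathcal{C}))$ is given by $R(\lambda,\mathcal{C})f=\lim_{n\to\infty}R(\lambda,A)\sum_{k=0}^n(P(\varphi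 R(\lambda,A)))^kf$ for $f\in L^1$, $\lambda>0$; it satisfies $\mathcal{D}(A)\subseteq\mathcal{D}(\mathcal{C})$ and $\mathcal{C}f=Af+P(\varphi f)$ for $f\in\mathcal{D}(A)$. *)

From HB Require Import structures.
From mathcomp Require Import all_boot all_order all_algebra.
From mathcomp Require Import all_classical all_reals all_analysis.

Set Implicit Arguments.
Unset Strict Implicit.
Unset Printing Implicit Defensive.

Import Order.TTheory GRing.Theory Num.Theory.
Import numFieldNormedType.Exports.

Local Open Scope classical_set_scope.
Local Open Scope ring_scope.

(* Elements of L^1(E,m) are represented by real functions E -> R that are
   m-integrable; two representatives denote the same element of L^1 iff they
   agree m-a.e.  (Linear) operators on L^1 are represented by maps on
   representatives that send integrable functions to integrable functions and
   respect a.e.-equality. *)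

Definition Op (E : Type) (R : realType) := (E -> R) -> (E -> R).

Section L1.
Context d (E : measurableType d) (R : realType) (m : {measure set E -> \bar R}).

Definition L1 (f : E -> R) : Prop := m.-integrable setT (EFin \o f).

Definition aeeq (f g : E -> R) : Prop := {ae m, forall x, f x = g x}.

Definition aenonneg (f : E -> R) : Prop := {ae m, forall x, 0 <= f x}.

Definition L1norm (f : E -> R) : \bar R := (\int[m]_x `|f x|%:E)%E.

Definition L1plus (f : E -> R) : Prop := L1 f /\ aenonneg f.

Definition density (f : E -> R) : Prop := L1plus f /\ L1norm f = 1%E.

Definition linear_op (Q : Op E R) : Prop :=
  [/\ (forall f, L1 f -> L1 (Q f)),
      (forall f g, L1 f -> L1 g -> aeeq f g -> aeeq (Q f) (Q g)) &
      (forall (a : R) f g, L1 f -> L1 g ->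
         aeeq (Q (fun x => a * f x + g x)) (fun x => a * Q f x + Q g x))].

Definition stochastic (Q : Op E R) : Prop :=
  linear_op Q /\ (forall f, density f -> density (Q f)).

Definition substochastic (Q : Op E R) : Prop :=
  [/\ linear_op Q,
      (forall f, L1plus f -> aenonneg (Q f)) &
      (forall f, L1 f -> (L1norm (Q f) <= L1norm f)%E)].

(* C_0-semigroup on L^1 (the operators are bounded as soon as they are
   substochastic, which is the only case used below) *)
Definition C0_semigroup (S : R -> Op E R) : Prop :=
  [/\ (forall t, 0 <= t -> linear_op (S t)),
      (forall f, L1 f -> aeeq (S 0 f) f),
      (forall s t f, 0 <= s -> 0 <= t -> L1 f ->
         aeeq (S (s + t) f) (S s (S t f))) &
      (forall f, L1 f ->
         (fun t => L1norm (fun x => S t f x - f x)) @ 0^'+ --> 0%E)].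

Definition substochastic_semigroup (S : R -> Op E R) : Prop :=
  C0_semigroup S /\ (forall t, 0 <= t -> substochastic (S t)).

Definition stochastic_semigroup (S : R -> Op E R) : Prop :=
  C0_semigroup S /\ (forall t, 0 <= t -> stochastic (S t)).

Definition is_generator (S : R -> Op E R) (D : set (E -> R)) (A : Op E R) :
  Prop :=
  [/\ (forall f, D f -> L1 f),
      (forall f, L1 f ->
         (D f <-> exists g, L1 g /\
            (fun t => L1norm (fun x => (S t f x - f x) / t - g x))
              @ 0^'+ --> 0%E)) &
      (forall f, D f -> L1 (A f) /\
            (fun t => L1norm (fun x => (S t f x - f x) / t - A f x))
              @ 0^'+ --> 0%E)].

(* the resolvent R(lambda, A) = (lambda - A)^{-1}: R(lambda,A) g is an element
   u of D with lambda u - A u = g (unique up to a.e. equality when lambda is in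
   the resolvent set, e.g. lambda > 0 for generators of contraction
   semigroups) *)
Definition resolvent (D : set (E -> R)) (A : Op E R) (lambda : R) : Op E R :=
  fun g => xget (fun _ => 0)
    [set u | D u /\ aeeq (fun x => lambda * u x - A u x) g].

Definition L1phi (phi : E -> R) (f : E -> R) : Prop :=
  L1 f /\ (\int[m]_x (phi x * `|f x|)%:E < +oo)%E.

Definition KP (P : Op E R) (phi : E -> R) (D : set (E -> R)) (A : Op E R)
  (lambda : R) : Op E R :=
  fun f => P (fun x => phi x * resolvent D A lambda f x).

Definition minimal_semigroup (P : Op E R) (phi : E -> R) (D : set (E -> R))
  (A : Op E R) (Pt : R -> Op E R) : Prop :=
  substochastic_semigroup Pt /\
  exists (DC : set (E -> R)) (C : Op E R),
    is_generator Pt DC C /\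
    forall (lambda : R) (f : E -> R), 0 < lambda -> L1 f ->
      (fun n : nat =>
         L1norm (fun x =>
           resolvent D A lambda
             (fun y => \sum_(k < n.+1) iter k (KP P phi D A lambda) f y) x
           - resolvent DC C lambda f x)) @ \oo --> 0%E.

End L1.

From HB Require Import structures.
From mathcomp Require Import all_boot all_order all_algebra.
From mathcomp Require Import all_classical all_reals all_analysis.
From mathcomp Require Import lra measurable_realfun.
Import Order.TTheory GRing.Theory Num.Theory.
Import numFieldNormedType.Exports.
Local Open Scope classical_set_scope.
Local Open Scope ring_scope.

Set Implicit Arguments.
Unset Strict Implicit.

(* A substochastic operator [Q] with an invariant density [w > 0] a.e. is
   stochastic.  For a density [f], the truncations [g_n = min (f, n w)] are
   dominated both by [f] and by a multiple of [w].  Positivity gives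
   [int Q g_n <= int Q f], and since [Q] preserves the mass of [n w] while
   not increasing that of [n w - g_n], it cannot lose mass on [g_n]:
   [int g_n <= int Q g_n].  As [w > 0] a.e., [g_n] increases to [f], so
   monotone convergence yields [1 = int f <= int Q f <= 1]. *)

Section truncation.
Context {R : realType}.

Definition trunc (a b c : R) : R := Num.min (Num.max a 0) (c * Num.max b 0).

Lemma trunc_ge0 a b c : 0 <= c -> 0 <= trunc a b c.
Proof.
by move=> c0; rewrite le_min le_max lexx orbT mulr_ge0 // le_max lexx orbT.
Qed.

Lemma trunc_le a b c : 0 <= a -> trunc a b c <= a.
Proof. by move=> a0; rewrite ge_min ge_max lexx a0. Qed.

Lemma trunc_le_mul a b c : 0 <= b -> trunc a b c <= c * b.
Proof. by move=> b0; rewrite /trunc (max_idPl b0) ge_min lexx orbT. Qed.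

Lemma trunc_norm_le a b c : 0 <= c -> `|trunc a b c| <= `|a|.
Proof.
move=> c0; rewrite ger0_norm ?trunc_ge0 // ge_min; apply/orP; left.
by rewrite ge_max ler_norm normr_ge0.
Qed.

Lemma trunc_homo a b : {homo trunc a b : c c' / c <= c'}.
Proof.
move=> c c' cc'; rewrite le_min ge_min lexx /= ge_min; apply/orP; right.
by rewrite ler_wpM2r // le_max lexx orbT.
Qed.

Lemma trunc_id a b c : 0 <= a -> 0 < b -> a / b <= c -> trunc a b c = a.
Proof.
move=> a0 b0 abc; rewrite /trunc (max_idPl a0) (max_idPl (ltW b0)).
by apply/min_idPl; rewrite -ler_pdivrMr.
Qed.

End truncation.

Section L1_facts.
Context d (E : measurableType d) (R : realType) (m : {measure set E -> \bar R}).
Implicit Types (f g w : E -> R) (Q : Op E R).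

Lemma L1_measurable f : L1 m f -> measurable_fun setT f.
Proof. by move/(measurable_int m)/measurable_EFinP. Qed.

Lemma L1_integralE f : L1 m f -> (\int[m]_x (f x)%:E)%E = (\int[m]_x f x)%:E.
Proof. by move=> Lf; rewrite fineK //; exact: integrable_fin_num. Qed.

Lemma L1_scale c f : L1 m f -> L1 m (fun x => c * f x).
Proof.
move=> Lf; rewrite /L1 (_ : _ \o _ = (fun x => c%:E * (EFin \o f) x)%E).
  exact: integrableZl.
by apply/funext => x /=; rewrite EFinM.
Qed.

Lemma L1_sub f g : L1 m f -> L1 m g -> L1 m (fun x => f x - g x).
Proof.
move=> Lf Lg; rewrite /L1 (_ : _ \o _ = (EFin \o f) \- (EFin \o g))%E.
  exact: integrableB.
by apply/funext => x /=; rewrite EFinB.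
Qed.

Lemma L1_scale_add c f g : L1 m f -> L1 m g -> L1 m (fun x => c * f x + g x).
Proof.
move=> Lf Lg; rewrite /L1
  (_ : _ \o _ = (EFin \o (fun x => c * f x)%R) \+ (EFin \o g))%E.
  exact/integrableD/Lg/L1_scale.
by apply/funext => x /=; rewrite EFinD.
Qed.

Lemma L1_trunc f w c : L1 m f -> measurable_fun setT w -> 0 <= c ->
  L1 m (fun x => trunc (f x) (w x) c).
Proof.
move=> Lf mw c0; apply: (le_integrable _ _ _ Lf) => //.
  apply/measurable_EFinP/measurable_minr.
  - by apply: measurable_maxr => //; exact: L1_measurable.
  - by apply: measurable_funM => //; exact: measurable_maxr.
by move=> x _ /=; rewrite lee_fin trunc_norm_le.
Qed.

Lemma Rintegral_aeeq f g : L1 m f -> L1 m g -> aeeq m f g ->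
  \int[m]_x f x = \int[m]_x g x.
Proof.
move=> Lf Lg fg; congr fine; apply: ae_eq_integral => //.
- exact: measurable_int Lf.
- exact: measurable_int Lg.
- by apply: filterS fg => x /= ->.
Qed.

Lemma Rintegral_scale_add c f g : L1 m f -> L1 m g ->
  \int[m]_x (c * f x + g x) = c * \int[m]_x f x + \int[m]_x g x.
Proof. by move=> Lf Lg; rewrite RintegralD ?RintegralZl //; exact: L1_scale. Qed.

Lemma L1normE f : L1plus m f -> L1norm m f = (\int[m]_x f x)%:E.
Proof.
move=> [Lf f0]; rewrite -L1_integralE //; apply: ae_eq_integral => //.
- by apply/measurable_EFinP/measurableT_comp => //; exact: L1_measurable.
- exact: measurable_int Lf.
- by apply: filterS f0 => x /= fx _; rewrite ger0_norm.
Qed.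

Lemma L1plus_Rintegral_ge0 f : L1plus m f -> 0 <= \int[m]_x f x.
Proof.
move=> Pf; rewrite -lee_fin -L1normE //.
by apply: integral_ge0 => x _; rewrite lee_fin.
Qed.

Lemma density_Rintegral f : density m f -> \int[m]_x f x = 1.
Proof. by case=> Pf; rewrite L1normE // => -[]. Qed.

Lemma Rintegral_le_trunc f w (M : R) :
  L1plus m f -> measurable_fun setT w -> {ae m, forall x, 0 < w x} ->
  (forall n : nat, \int[m]_x trunc (f x) (w x) n%:R <= M) ->
  \int[m]_x f x <= M.
Proof.
move=> [Lf f0] mw w0 truncM.
pose g n x := (trunc (f x) (w x) n%:R)%:E.
have Lg n : L1 m (fun x => trunc (f x) (w x) n%:R) by exact: L1_trunc.
have mg n : measurable_fun setT (g n) by exact: measurable_int (Lg n).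
have g0 n x : setT x -> (0 <= g n x)%E by rewrite lee_fin trunc_ge0.
have g_homo x : setT x -> {homo g^~ x : n k / (n <= k)%N >-> (n <= k)%E}.
  by move=> _ n k nk; rewrite lee_fin trunc_homo // ler_nat.
(* [g_n x] is eventually [f x] as soon as [w x > 0]. *)
have f_lim : (\int[m]_x (f x)%:E = \int[m]_x limn (g^~ x))%E.
  apply: ae_eq_integral => //.
  - exact: measurable_int Lf.
  - apply: (emeasurable_fun_cvg g) => // x _.
    exact/ereal_nondecreasing_is_cvgn/g_homo.
  apply: filterS2 w0 f0 => x /= wx fx _; apply/esym/lim_near_cst => //.
  exists (Num.Def.archi_bound (f x / w x)) => // n /= Nn.
  rewrite /g trunc_id // ltW // (lt_le_trans (archi_boundP _)) ?ler_nat //.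
  by rewrite divr_ge0 // ltW.
rewrite -lee_fin -L1_integralE // f_lim monotone_convergence //.
apply: lime_le.
  apply: ereal_nondecreasing_is_cvgn => n k nk.
  by apply: ge0_le_integral => // x _; [exact: g0 | exact: g_homo].
by apply: nearW => n; rewrite /g L1_integralE // lee_fin.
Qed.

Section linear_op.
Variable Q : Op E R.
Hypothesis Qlin : linear_op m Q.

Lemma linear_op_L1 f : L1 m f -> L1 m (Q f).
Proof. by case: Qlin => Q1 _ _ /Q1. Qed.

Lemma linear_op_Rintegral_scale_add c f g : L1 m f -> L1 m g ->
  \int[m]_x Q (fun y => c * f y + g y) x = c * \int[m]_x Q f x + \int[m]_x Q g x.
Proof.
case: Qlin => Q1 _ Qadd Lf Lg.
rewrite -Rintegral_scale_add; [|exact: Q1..].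
apply: Rintegral_aeeq; last exact: Qadd.
- exact/Q1/L1_scale_add.
- by apply: L1_scale_add; exact: Q1.
Qed.

Lemma linear_op_Rintegral0 : L1 m (fun _ => 0) -> \int[m]_x Q (fun _ => 0) x = 0.
Proof.
move=> L0; have := linear_op_Rintegral_scale_add 1 L0 L0.
rewrite (_ : (fun _ => 1 * 0 + 0) = fun _ => 0); last first.
  by apply/funext => x; rewrite mulr0 addr0.
by rewrite mul1r; lra.
Qed.

Lemma linear_op_RintegralZ c f : L1 m f ->
  \int[m]_x Q (fun y => c * f y) x = c * \int[m]_x Q f x.
Proof.
move=> Lf; have L0 : L1 m (fun _ => 0) by exact: integrable0.
rewrite -[RHS]addr0 -(linear_op_Rintegral0 L0) -linear_op_Rintegral_scale_add //.
by congr Rintegral; congr Q; apply/funext => x; rewrite addr0.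
Qed.

Lemma linear_op_Rintegral_add_sub f g : L1 m f -> L1 m g ->
  \int[m]_x Q f x = \int[m]_x Q g x + \int[m]_x Q (fun y => f y - g y) x.
Proof.
move=> Lf Lg; rewrite -[\int[m]_x Q g x]mul1r -linear_op_Rintegral_scale_add //.
  by congr Rintegral; congr Q; apply/funext => x; rewrite mul1r addrC subrK.
exact: L1_sub.
Qed.

End linear_op.

Section substochastic.
Variable Q : Op E R.
Hypothesis Qsub : substochastic m Q.

Let Qlin : linear_op m Q. Proof. by case: Qsub. Qed.

Lemma substochastic_L1plus f : L1plus m f -> L1plus m (Q f).
Proof.
by case: Qsub => [[Q1 _ _] Qpos _] [Lf f0]; split; [exact: Q1 | exact: Qpos].
Qed.

Lemma substochastic_Rintegral_le f :
  L1plus m f -> \int[m]_x Q f x <= \int[m]_x f x.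
Proof.
move=> Pf; case: Qsub => _ _ /(_ f Pf.1).
by rewrite !L1normE ?lee_fin //; exact: substochastic_L1plus.
Qed.

Lemma substochastic_Rintegral_le_homo f g : L1 m f -> L1 m g ->
  {ae m, forall x, g x <= f x} -> \int[m]_x Q g x <= \int[m]_x Q f x.
Proof.
move=> Lf Lg gf; rewrite (linear_op_Rintegral_add_sub Qlin Lf Lg) lerDl.
apply/L1plus_Rintegral_ge0/substochastic_L1plus; split; first exact: L1_sub.
by apply: filterS gf => x; rewrite subr_ge0.
Qed.

Lemma substochastic_Rintegral_ge_invariant w g (c : R) :
  L1 m w -> aeeq m (Q w) w -> L1 m g -> {ae m, forall x, g x <= c * w x} ->
  \int[m]_x g x <= \int[m]_x Q g x.
Proof.
move=> Lw Qw Lg gw.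
have Lcw : L1 m (fun x => c * w x) by exact: L1_scale.
have cw_mass : \int[m]_x Q (fun y => c * w y) x = c * \int[m]_x w x.
  rewrite linear_op_RintegralZ // (Rintegral_aeeq _ Lw Qw) //.
  exact: linear_op_L1.
have rest : \int[m]_x Q (fun y => c * w y - g y) x
             <= c * \int[m]_x w x - \int[m]_x g x.
  rewrite -RintegralZl // -RintegralB //; apply: substochastic_Rintegral_le.
  split; first exact: L1_sub.
  by apply: filterS gw => x; rewrite subr_ge0.
have := linear_op_Rintegral_add_sub Qlin Lcw Lg; rewrite cw_mass; lra.
Qed.

Lemma substochastic_stochastic_invariant w :
  L1plus m w -> aeeq m (Q w) w -> {ae m, forall x, 0 < w x} -> stochastic m Q.
Proof.
move=> [Lw w0] Qw wpos; split => // f fd.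
have [[Lf f0] _] := fd; have PQf := substochastic_L1plus fd.1.
split => //; rewrite L1normE //; congr EFin; apply/eqP; rewrite eq_le.
rewrite -(density_Rintegral fd) substochastic_Rintegral_le //=.
apply: Rintegral_le_trunc (L1_measurable Lw) wpos _ => //= n.
have Lg := L1_trunc Lf (L1_measurable Lw) (ler0n R n).
apply: le_trans (substochastic_Rintegral_ge_invariant Lw Qw Lg _) _.
- by apply: filterS w0 => x; exact: trunc_le_mul.
- apply: substochastic_Rintegral_le_homo => //.
  by apply: filterS f0 => x; exact: trunc_le.
Qed.

End substochastic.

End L1_facts.

Unset Implicit Arguments.

Theorem mainTheorem6 (d : measure_display) (E : measurableType d)
  (R : realType) (m : {measure set E -> \bar R})
  (m_sigma_finite : sigma_finite setT m)
  (P : Op E R) (P_stoch : stochastic m P)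
  (phi : E -> R) (phi_meas : measurable_fun setT phi)
  (phi_ge0 : forall x, 0 <= phi x)
  (S : R -> Op E R) (D : set (E -> R)) (A : Op E R)
  (S_sub : substochastic_semigroup m S)
  (A_gen : is_generator m S D A)
  (D_sub : forall f, D f -> L1phi m phi f)
  (A_int : forall f, D f -> aenonneg m f ->
     (\int[m]_x (A f x)%:E = - \int[m]_x (phi x * f x)%:E)%E)
  (Pt : R -> Op E R) (Pt_min : minimal_semigroup m P phi D A Pt)
  (ft : E -> R) (ft_dens : density m ft)
  (ft_inv : forall t, 0 <= t -> aeeq m (Pt t ft) ft)
  (ft_pos : {ae m, forall x, 0 < ft x}) :
  stochastic_semigroup m Pt.
Proof.
have [[Pt_C0 Pt_sub] _] := Pt_min.
split=> // t t0.
exact: (substochastic_stochastic_invariant (Pt_sub t t0) ft_dens.1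
  (ft_inv t t0) ft_pos).
Qed.
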